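(* Let $\langle A, \leq, \otimes, \ominus, \mathbf{1}\rangle$ be a residuated partially ordered monoid with bottom element $\bot$, let $k\geq1$ and $a = a_1\ldots a_k$, $b = b_1\ldots b_k \in Lex_k(A)$. Define $\gamma(a,b) = \min\{ i \mid a_i \ominus b_i \in C(A)\}$ and $\delta(a,b) = \min\{ i \mid (a_i \ominus b_i) \otimes b_i < a_i\}$, each being $k+1$ when the set is empty. Then either $\delta(a,b) = k+1$ or $\delta(a,b) \leq \gamma(a,b)$.
   Context: A residuated partially ordered monoid $\langle A, \leq, \otimes, \ominus, \mathbf{1}\rangle$ consists of a partial order $\langle A,\leq\rangle$, a commutative monoid $\langle A,\otimes,\mathbf{1}\rangle$, and a binary operation $\ominus$ on $A$ such that for all $a,b,c\in A$: $b \otimes c \leq a$ iff $c \leq a \ominus b$. $a<b$ means $a\leq b$, $a\neq b$. $I(A) = \{c \in A \mid \forall a,b \in A.\ a \otimes c = b \otimes c \Rightarrow a = b\}$, $C(A)=A\setminus I(A)$. $Lex_k(A)\subseteq A^k$ is defined by $Lex_1(A) = A$ and $Lex_{k+1}(A) = I(A)\, Lex_k(A) \cup C(A)\{\bot\}^k$, where $XY$ denotes the set of concatenations of sequences and $\{\bot\}^k$ the singleton of the sequence of $k$ copies of $\bot$. *)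

From mathcomp Require Import all_boot.
Set Implicit Arguments. Unset Strict Implicit. Unset Printing Implicit Defensive.

(* Residuated partially ordered monoid <A, le, mul, res, one>
   (mul = otimes, res a b = a ominus b). *)
Definition residuated_pomonoid (A : Type) (le : A -> A -> Prop)
  (mul res : A -> A -> A) (one : A) : Prop :=
  (forall x, le x x) /\
  (forall x y, le x y -> le y x -> x = y) /\
  (forall x y z, le x y -> le y z -> le x z) /\
  (forall x y z, mul x (mul y z) = mul (mul x y) z) /\
  (forall x y, mul x y = mul y x) /\
  (forall x, mul one x = x) /\
  (forall a b c, le (mul b c) a <-> le c (res a b)).

Definition is_bottom (A : Type) (le : A -> A -> Prop) (bot : A) : Prop :=
  forall x, le bot x.

Definition strict (A : Type) (le : A -> A -> Prop) (x y : A) : Prop :=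
  le x y /\ x <> y.

(* I(A): cancellative elements; C(A): the rest *)
Definition cancellative (A : Type) (mul : A -> A -> A) (c : A) : Prop :=
  forall a b, mul a c = mul b c -> a = b.
Definition noncancellative (A : Type) (mul : A -> A -> A) (c : A) : Prop :=
  ~ cancellative mul c.

(* lexS mul bot n s  <->  s \in Lex_{n+1}(A) *)
Fixpoint lexS (A : Type) (mul : A -> A -> A) (bot : A) (n : nat) (s : seq A)
  : Prop :=
  match n with
  | 0 => exists x, s = [:: x]
  | n'.+1 =>
      (exists c t, s = c :: t /\ cancellative mul c /\ lexS mul bot n' t)
      \/ (exists c, s = c :: nseq n'.+1 bot /\ noncancellative mul c)
  end.

(* Lex_k(A) for k >= 1 (empty for k = 0, which is excluded anyway) *)
Definition Lex (A : Type) (mul : A -> A -> A) (bot : A) (k : nat) (s : seq A)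
  : Prop :=
  match k with
  | 0 => False
  | n.+1 => lexS mul bot n s
  end.

Definition is_min_index (k : nat) (P : nat -> Prop) (m : nat) : Prop :=
  ((1 <= m <= k) /\ P m /\ (forall i, 1 <= i -> i < m -> ~ P i))
  \/ (m = k.+1 /\ (forall i, 1 <= i <= k -> ~ P i)).

Definition ith (A : Type) (bot : A) (s : seq A) (i : nat) : A := nth bot s i.-1.

Definition gamma_spec (A : Type) (mul res : A -> A -> A) (bot : A) (k : nat)
  (a b : seq A) (g : nat) : Prop :=
  is_min_index k (fun i => noncancellative mul (res (ith bot a i) (ith bot b i))) g.

Definition delta_spec (A : Type) (le : A -> A -> Prop) (mul res : A -> A -> A)
  (bot : A) (k : nat) (a b : seq A) (d : nat) : Prop :=
  is_min_index k (fun i =>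
    strict le (mul (res (ith bot a i) (ith bot b i)) (ith bot b i)) (ith bot a i)) d.

(* Let g < d <= k.  Minimality of d makes (a_g - b_g) * b_g <= a_g an
   equality, so a_g factors through the non-cancellative a_g - b_g and is
   itself non-cancellative.  In Lex_k(A) everything after a non-cancellative
   entry is bot, hence a_d = bot, and nothing lies strictly below bot. *)
From mathcomp Require Import all_boot.
From Stdlib Require Import Classical.

Set Implicit Arguments. Unset Strict Implicit. Unset Printing Implicit Defensive.

Lemma residuated_counit (A : Type) (le : A -> A -> Prop) (mul res : A -> A -> A)
    (one x y : A) :
  residuated_pomonoid le mul res one -> le (mul (res x y) y) x.
Proof.
by move=> [refl [_ [_ [_ [comm [_ resid]]]]]]; rewrite comm; apply/resid.
Qed.

Lemma cancellative_mull (A : Type) (mul : A -> A -> A) (x y : A) :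
  (forall x y z, mul x (mul y z) = mul (mul x y) z) ->
  cancellative mul (mul x y) -> cancellative mul x.
Proof. by move=> assoc cxy u v uv; apply: cxy; rewrite !assoc uv. Qed.

Lemma not_strict_eq (A : Type) (le : A -> A -> Prop) (x y : A) :
  le x y -> ~ strict le x y -> x = y.
Proof. by move=> lexy nstr; apply: NNPP => nxy; apply: nstr. Qed.

Lemma lexS_nth_bot (A : Type) (mul : A -> A -> A) (bot : A) (n : nat)
    (s : seq A) (i j : nat) :
  lexS mul bot n s -> noncancellative mul (nth bot s i) ->
  i < j <= n -> nth bot s j = bot.
Proof.
elim: n s i j => [|n IH] s i j /=; first by rewrite leqn0 andbC => _ _ /andP[/eqP->].
case=> [[c [t [-> [cc lt_]]]]|[c [-> _]]].
  case: i => [|i] /= nc; first by case: nc.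
  by case: j => [|j] //= ijn; apply: IH lt_ nc ijn.
by case: j => [|[|j]] //= _ _; rewrite nth_nseq if_same.
Qed.

Lemma Lex_ith_bot (A : Type) (mul : A -> A -> A) (bot : A) (k : nat)
    (s : seq A) (i j : nat) :
  Lex mul bot k s -> noncancellative mul (ith bot s i) ->
  1 <= i -> i < j <= k -> ith bot s j = bot.
Proof.
case: k => [//|n] /= ls nc; case: i nc => [//|i] nc _.
case: j => [//|j] ijn; exact: lexS_nth_bot ls nc ijn.
Qed.

Theorem lemma9 (A : Type) (le : A -> A -> Prop) (mul res : A -> A -> A)
  (one bot : A) (k : nat) (a b : seq A) (g d : nat) :
  residuated_pomonoid le mul res one ->
  is_bottom le bot ->
  1 <= k ->
  Lex mul bot k a -> Lex mul bot k b ->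
  gamma_spec mul res bot k a b g ->
  delta_spec le mul res bot k a b d ->
  d = k.+1 \/ d <= g.
Proof.
move=> rpm hbot _ La _ hg hd.
have [_ [anti [_ [assoc _]]]] := rpm.
case: hg => [[/andP[g1 _] [gnc _]]|[-> _]]; last first.
  by right; case: hd => [[/andP[_ dk] _]|[-> _]] //; apply: leqW.
case: hd => [[/andP[d1 dk] [dstr dmin]]|[-> _]]; last by left.
right; rewrite leqNgt; apply/negP => gd.
set x := res (ith bot a g) (ith bot b g) in gnc dmin.
have x_b_eq : mul x (ith bot b g) = ith bot a g.
  exact: not_strict_eq (residuated_counit _ _ rpm) (dmin g g1 gd).
have anc : noncancellative mul (ith bot a g).
  by rewrite -x_b_eq => /(cancellative_mull assoc).
have abot : ith bot a d = bot by apply: Lex_ith_bot La anc g1 _; rewrite gd dk.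
by case: dstr; rewrite abot => le_bot; apply; exact: anti le_bot (hbot _).
Qed.
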